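(* Let $C=[x,x+1)\times[y,y+1)$ with $x,y\in\mathbb{Z}$ be a cell of the integer grid, let $\mathcal{D}(C)$ be a finite set of disks of radius $\sqrt{2}$ whose centers lie in $C$, let $\ell_{\mathrm{top}}(C)$ be the line containing the top edge of $C$, and let $U_{\mathrm{top}}(C)$ be the part of the union of the disks in $\mathcal{D}(C)$ lying above $\ell_{\mathrm{top}}(C)$. Then each disk $D_i\in\mathcal{D}(C)$ contributes at most one arc to the boundary of $U_{\mathrm{top}}(C)$. Moreover, for disks $D_i,D_j\in\mathcal{D}(C)$ with centers $p_i,p_j$ that both contribute arcs, the arc contributed by $D_i$ lies to the left of the arc contributed by $D_j$ if and only if $p_i$ lies to the left of $p_j$. *)

From HB Require Import structures.
From mathcomp Require Import all_boot all_order all_algebra.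
From mathcomp Require Import all_classical all_reals all_analysis.
Import numFieldNormedType.Exports.
Set Implicit Arguments. Unset Strict Implicit. Unset Printing Implicit Defensive.
Import Order.TTheory GRing.Theory Num.Theory.
Local Open Scope classical_set_scope.
Local Open Scope ring_scope.

Definition dist2 {R : realType} (a b : R * R) : R :=
  (a.1 - b.1) ^+ 2 + (a.2 - b.2) ^+ 2.

Definition disk2 {R : realType} (p : R * R) : set (R * R) :=
  [set q | dist2 q p <= 2].

Definition circle2 {R : realType} (p : R * R) : set (R * R) :=
  [set q | dist2 q p = 2].

Definition bdry {R : realType} (A : set (R * R)) : set (R * R) :=
  closure A `\` interior A.

Definition in_cell {R : realType} (x y : int) (p : R * R) : Prop :=
  x%:~R <= p.1 < x%:~R + 1 /\ y%:~R <= p.2 < y%:~R + 1.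

Definition Utop {R : realType} (y : int) (P : seq (R * R)) : set (R * R) :=
  [set q | (exists2 p, p \in P & disk2 p q) /\ y%:~R + 1 <= q.2].

(* the part of the boundary of U_top(C) contributed by the disk centred at p:
   points of the boundary of U_top lying on the circle of that disk
   (strictly above l_top, i.e. excluding the segment on the line) *)
Definition contrib {R : realType} (y : int) (P : seq (R * R)) (p : R * R)
  : set (R * R) :=
  [set q | bdry (Utop y P) q /\ circle2 p q /\ y%:~R + 1 < q.2].

(* the disk contributes an arc (of positive length) *)
Definition contributes {R : realType} (y : int) (P : seq (R * R)) (p : R * R)
  : Prop :=
  exists a b, [/\ contrib y P p a, contrib y P p b & a <> b].

Definition left_of {R : realType} (A B : set (R * R)) : Prop :=
  forall a b, A a -> B b -> a.1 <= b.1.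

From HB Require Import structures.
From mathcomp Require Import all_boot all_order all_algebra.
From mathcomp Require Import all_classical all_reals all_analysis.
From mathcomp Require Import ring lra.
Set Implicit Arguments. Unset Strict Implicit. Unset Printing Implicit Defensive.
Import Order.TTheory GRing.Theory Num.Theory numFieldNormedType.Exports.
Local Open Scope classical_set_scope.
Local Open Scope ring_scope.

(* All centres lie below l_top, so a point of a circle strictly above l_top
   is on the boundary of U_top exactly when it lies in no open disk (moving it
   upwards leaves every disk): the arc contributed by D_p is the part of the
   upper arc of p above l_top outside all open disks.  The key fact is that
   a disk centred at r to the right of p meets the upper arc of p (above r)
   in a piece closed to the right: a point q' of the arc to the right of a
   point q of the disk is either closer to r than q, or coordinatewise closer
   to r than to p.  Hence each contribution is an interval in x, so connected,
   and two upper arcs outside each other's disks are ordered like their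
   centres; reflecting in a vertical line gives the symmetric statements. *)

Lemma eq_pair (A B : Type) (u v : A * B) : u.1 = v.1 -> u.2 = v.2 -> u = v.
Proof. by case: u v => ? ? [? ?] /= -> ->. Qed.

Section Geometry.
Variable R : realType.
Implicit Types p q r : R * R.

(* Coordinates relative to the centre p of the circle: q = (a, b), q' = (a', b')
   and r = (d1, d2). *)
Lemma upper_chord_in_disk (a b a' b' d1 d2 : R) :
  a ^+ 2 + b ^+ 2 = 2 -> a' ^+ 2 + b' ^+ 2 = 2 -> a < a' ->
  0 < b -> 0 < b' -> d2 < b -> d2 < b' -> 0 <= d1 -> 0 < d1 ^+ 2 + d2 ^+ 2 ->
  (a - d1) ^+ 2 + (b - d2) ^+ 2 <= 2 -> (a' - d1) ^+ 2 + (b' - d2) ^+ 2 < 2.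
Proof.
move=> hq hq' aa' b0 b'0 bd b'd d10 D0 hin.
have hM : d1 ^+ 2 + d2 ^+ 2 <= 2 * (a * d1 + b * d2) by nra.
suff : d1 ^+ 2 + d2 ^+ 2 < 2 * (a' * d1 + b' * d2) by nra.
have [d2le0|d2gt0] := lerP d2 0.
  have ad1 : 0 < a * d1 by nra.
  have a0 : 0 < a by rewrite ltNge; apply/negP => a0; nra.
  have d1gt0 : 0 < d1 by rewrite ltNge; apply/negP => ?; nra.
  have b'b : b' < b by nra.
  have : 0 < (a' - a) * d1 by rewrite mulr_gt0 // subr_gt0.
  have : 0 <= (b' - b) * d2 by rewrite mulr_le0 // subr_le0 ltW.
  nra.
have [d1le|d1gt] := lerP d1 (2 * a'); first by nra.
have [b'b|bb'] := lerP b' b; last by nra.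
nra.
Qed.

Lemma upper_arc_right_in_disk2 p r q q' :
  dist2 q p = 2 -> dist2 q' p = 2 -> q.1 < q'.1 ->
  p.2 < q.2 -> p.2 < q'.2 -> r.2 < q.2 -> r.2 < q'.2 -> p.1 <= r.1 -> p <> r ->
  dist2 q r <= 2 -> dist2 q' r < 2.
Proof.
rewrite /dist2 => hq hq' qq' pq pq' rq rq' pr neq hin.
have shift (u v w : R) : u - v = (u - w) - (v - w) by ring.
rewrite [q'.1 - _](shift _ _ p.1) [q'.2 - _](shift _ _ p.2).
rewrite [q.1 - r.1](shift _ _ p.1) [q.2 - r.2](shift _ _ p.2) in hin.
apply: upper_chord_in_disk hin; rewrite ?subr_ge0 ?ltrBlDr ?subrK //; try lra.
rewrite lt0r paddr_eq0 ?sqr_ge0 // !sqrf_eq0 !subr_eq0 addr_ge0 ?sqr_ge0 //.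
by rewrite andbT; apply/negP => /andP[/eqP e1 /eqP e2]; apply: neq; apply: eq_pair.
Qed.

Definition mirror p : R * R := (- p.1, p.2).

Lemma mirror_inj : injective mirror.
Proof. by move=> p q [/oppr_inj e1 e2]; apply: eq_pair. Qed.

Lemma dist2_mirror p q : dist2 (mirror p) (mirror q) = dist2 p q.
Proof. by rewrite /dist2 /= -opprD sqrrN. Qed.

Lemma upper_arc_left_in_disk2 p r q q' :
  dist2 q p = 2 -> dist2 q' p = 2 -> q.1 < q'.1 ->
  p.2 < q.2 -> p.2 < q'.2 -> r.2 < q.2 -> r.2 < q'.2 -> r.1 <= p.1 -> p <> r ->
  dist2 q' r <= 2 -> dist2 q r < 2.
Proof.
move=> hq hq' qq' pq pq' rq rq' rp neq.
rewrite -!(dist2_mirror _ r).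
apply: (@upper_arc_right_in_disk2 (mirror p) (mirror r) (mirror q'));
  by rewrite ?dist2_mirror ?ltrN2 ?lerN2 // => /mirror_inj.
Qed.

Definition upper_arc p (t : R) : R * R := (t, p.2 + Num.sqrt (2 - (t - p.1) ^+ 2)).

Lemma upper_arc_circle2 p t : (t - p.1) ^+ 2 <= 2 -> dist2 (upper_arc p t) p = 2.
Proof.
by move=> t2; rewrite /dist2 /= addrAC subrr add0r sqr_sqrtr ?subr_ge0 // subrKC.
Qed.

Lemma upper_arc_gt p t : (t - p.1) ^+ 2 < 2 -> p.2 < (upper_arc p t).2.
Proof. by move=> t2; rewrite ltrDl sqrtr_gt0 subr_gt0. Qed.

Lemma upper_arc_le p t u :
  (t - p.1) ^+ 2 <= (u - p.1) ^+ 2 -> (upper_arc p u).2 <= (upper_arc p t).2.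
Proof. by move=> tu; rewrite lerD2l ler_wsqrtr // lerB. Qed.

Lemma upper_arc_fst p q : dist2 q p = 2 -> p.2 <= q.2 -> upper_arc p q.1 = q.
Proof.
rewrite /dist2 => hq pq; apply: eq_pair => //=.
by rewrite -hq addrAC subrr add0r sqrtr_sqr ger0_norm ?subr_ge0 // subrKC.
Qed.

Lemma continuous_upper_arc p : continuous (upper_arc p).
Proof.
move=> t; apply: (@cvg_pair R R R (nbhs t) (nbhs t) (nbhs (upper_arc p t).2) _ _ _ id).
  exact: cvg_id.
apply: cvgD; first exact: cvg_cst.
apply: continuous_comp; last exact: sqrt_continuous.
apply: cvgB; first exact: cvg_cst.
by rewrite !expr2; apply: cvgM; apply: cvgB; (exact: cvg_id || exact: cvg_cst).
Qed.

Lemma sqr_between (lo x hi : R) :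
  lo <= x <= hi -> x ^+ 2 <= lo ^+ 2 \/ x ^+ 2 <= hi ^+ 2.
Proof. by move=> /andP[lx xh]; have [x0|x0] := lerP x 0; [left|right]; nra. Qed.

Lemma upper_arcs_ordered_lower p q a b :
  p.1 <= q.1 -> p.2 <= q.2 -> p <> q ->
  dist2 a p = 2 -> dist2 b q = 2 -> 2 <= dist2 a q -> 2 <= dist2 b p ->
  q.2 < a.2 -> q.2 < b.2 -> a.1 <= b.1.
Proof.
move=> pq1 pq2 neq ap bq a_out b_out a_above b_above.
rewrite leNgt; apply/negP => ba.
have aq1 : (a.1 - q.1) ^+ 2 < 2.
  have bq1 : (b.1 - q.1) ^+ 2 < 2 by move: bq; rewrite /dist2; nra.
  have ap1 : (a.1 - p.1) ^+ 2 < 2 by move: ap; rewrite /dist2; nra.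
  have : b.1 - q.1 <= a.1 - q.1 <= a.1 - p.1 by apply/andP; split; lra.
  by case/sqr_between => *; lra.
(* the point of the circle of q below a lies in the disk of p *)
pose a' := upper_arc q a.1.
have a'q : dist2 a' q = 2 by apply: upper_arc_circle2; apply: ltW.
have a'_above : q.2 < a'.2 by apply: upper_arc_gt.
have a'a : a'.2 <= a.2 by move: a'q a_out; rewrite /dist2 /=; nra.
have a'p : dist2 a' p <= 2.
  move: ap; rewrite /dist2 [a'.1]/=.
  have : 0 <= (a.2 - a'.2) * (a.2 + a'.2 - 2 * p.2) by apply: mulr_ge0; lra.
  nra.
have : dist2 b p < 2.
  apply: (upper_arc_left_in_disk2 bq a'q ba b_above a'_above _ _ pq1 _ a'p).
  - by lra.
  - by lra.
  - exact: nesym.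
by rewrite ltNge b_out.
Qed.

Lemma upper_arcs_ordered p q a b :
  p.1 <= q.1 -> p <> q ->
  dist2 a p = 2 -> dist2 b q = 2 -> 2 <= dist2 a q -> 2 <= dist2 b p ->
  p.2 < a.2 -> q.2 < a.2 -> p.2 < b.2 -> q.2 < b.2 -> a.1 <= b.1.
Proof.
move=> pq1 neq ap bq a_out b_out ap2 aq2 bp2 bq2.
have [pq2|qp2] := lerP p.2 q.2.
  exact: (upper_arcs_ordered_lower pq1 pq2 neq ap bq a_out b_out aq2 bq2).
rewrite -lerN2.
apply: (@upper_arcs_ordered_lower (mirror q) (mirror p) (mirror b) (mirror a));
  rewrite ?dist2_mirror /= ?lerN2 ?(ltW qp2) //.
by move/mirror_inj/esym.
Qed.

Lemma cvg_dist2 r q : dist2 z r @[z --> q] --> dist2 q r.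
Proof.
apply: cvgD; rewrite !expr2; apply: cvgM; apply: cvgB;
  (exact: cvg_cst || exact: cvg_fst || exact: cvg_snd).
Qed.

End Geometry.

Section Contributions.
Variables (R : realType) (y : int) (P : seq (R * R)).
Hypothesis centres_below : forall r, r \in P -> r.2 < y%:~R + 1.
Local Notation top := (y%:~R + 1 : R).
Implicit Types p q r : R * R.

Lemma interior_Utop r q :
  r \in P -> dist2 q r < 2 -> top < q.2 -> interior (Utop y P) q.
Proof.
move=> rP qr qtop.
have near_r : \forall z \near q, dist2 z r < 2.
  exact: cvgr_lt _ (@cvg_dist2 _ r q) _ qr.
have near_top : \forall z \near q, top < z.2.
  exact: cvgr_gt _ cvg_snd _ qtop.
apply: filterS2 near_r near_top => z zr ztop.
by split; [exists r; last apply: ltW | apply: ltW].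
Qed.

Lemma not_interior_Utop q :
  top < q.2 -> (forall r, r \in P -> 2 <= dist2 q r) -> ~ interior (Utop y P) q.
Proof.
move=> qtop far /nbhs_ballP[e /= e0 qeU].
have : ball q e (q.1, q.2 + e / 2).
  split => /=; first exact: ballxx.
  by rewrite /ball /= opprD addrA subrr add0r normrN gtr0_norm ?divr_gt0 //; lra.
move=> /qeU[[r rP]]; rewrite /disk2 /dist2 /= => in_r _.
have := far r rP; have := centres_below rP; rewrite /dist2 => r_below far_r.
have : 0 < e / 2 * (2 * (q.2 - r.2) + e / 2) by rewrite mulr_gt0 ?divr_gt0 //; lra.
nra.
Qed.

Lemma contribP p q : p \in P ->
  contrib y P p q <->
  [/\ dist2 q p = 2, top < q.2 & forall r, r \in P -> 2 <= dist2 q r].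
Proof.
move=> pP; split.
  move=> [[_ not_int] [qp qtop]]; split => // r rP.
  by rewrite leNgt; apply/negP => qr; apply/not_int/(interior_Utop rP qr qtop).
move=> [qp qtop far]; do 2?split => //; last exact: not_interior_Utop.
by apply: subset_closure; split; [exists p; rewrite /disk2 //= qp | exact: ltW].
Qed.

Lemma contrib_fst p q q' : p \in P ->
  contrib y P p q -> contrib y P p q' -> q.1 = q'.1 -> q = q'.
Proof.
move=> pP /(contribP _ pP)[qp qtop _] /(contribP _ pP)[q'p q'top _] qq'.
have := centres_below pP => p_below.
by rewrite -(upper_arc_fst qp) ?qq' ?upper_arc_fst //; lra.
Qed.

Lemma contrib_ordered p q a b : p \in P -> q \in P -> p.1 <= q.1 -> p <> q ->
  contrib y P p a -> contrib y P q b -> a.1 <= b.1.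
Proof.
move=> pP qP pq neq /(contribP _ pP)[ap atop afar] /(contribP _ qP)[bq btop bfar].
have := centres_below pP; have := centres_below qP => q_below p_below.
by apply: (upper_arcs_ordered pq neq ap bq (afar q qP) (bfar p pP)); lra.
Qed.

Lemma contrib_upper_arc_between p t1 t t2 : p \in P -> t1 <= t <= t2 ->
  contrib y P p (upper_arc p t1) -> contrib y P p (upper_arc p t2) ->
  contrib y P p (upper_arc p t).
Proof.
move=> pP t12 c1 c2.
have p_below := centres_below pP.
have arc_t u : contrib y P p (upper_arc p u) -> (t - p.1) ^+ 2 <= (u - p.1) ^+ 2 ->
    dist2 (upper_arc p t) p = 2 /\ top < (upper_arc p t).2.
  move=> /(contribP _ pP)[up utop _] tu; split; last exact: lt_le_trans (upper_arc_le tu).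
  apply/upper_arc_circle2/(le_trans tu).
  by have := sqr_ge0 ((upper_arc p u).2 - p.2); move: up; rewrite /dist2 /=; lra.
have [tp ttop] : dist2 (upper_arc p t) p = 2 /\ top < (upper_arc p t).2.
  have : t1 - p.1 <= t - p.1 <= t2 - p.1 by rewrite !lerD2r.
  by case/sqr_between; [exact: arc_t c1 | exact: arc_t c2].
apply/(contribP _ pP); split => // r rP.
have [<-|/eqP neq] := eqVneq p r; first by rewrite tp.
have r_below := centres_below rP.
move: t12 c1 c2 => /andP[t1t tt2] /(contribP _ pP)[t1p t1top t1far]
  /(contribP _ pP)[t2p t2top t2far].
rewrite leNgt; apply/negP => tr.
have [pr|rp] := lerP p.1 r.1.
  move: tt2; rewrite le_eqVlt => /predU1P[tt2|tt2].
    by move: tr; rewrite tt2 ltNge t2far.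
  have : dist2 (upper_arc p t2) r < 2.
    by apply: (upper_arc_right_in_disk2 tp t2p tt2 _ _ _ _ pr neq (ltW tr)); lra.
  by rewrite ltNge t2far.
move: t1t; rewrite le_eqVlt => /predU1P[t1t|t1t].
  by move: tr; rewrite -t1t ltNge t1far.
have : dist2 (upper_arc p t1) r < 2.
  by apply: (upper_arc_left_in_disk2 t1p tp t1t _ _ _ _ (ltW rp) neq (ltW tr)); lra.
by rewrite ltNge t1far.
Qed.

Lemma connected_contrib p : p \in P -> connected (contrib y P p).
Proof.
move=> pP.
have -> : contrib y P p = upper_arc p @` [set t | contrib y P p (upper_arc p t)].
  apply/seteqP; split => [q qc|_ [t ct <-] //].
  have [qp qtop _] := (contribP _ pP).1 qc.
  have := centres_below pP => p_below.
  by exists q.1; rewrite /= upper_arc_fst //; lra.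
apply: connected_continuous_connected.
  apply/connected_intervalP => t1 t2 c1 c2 t t12.
  exact: contrib_upper_arc_between pP t12 c1 c2.
exact/continuous_subspaceT/continuous_upper_arc.
Qed.

End Contributions.

Theorem lemma11 (R : realType) (x y : int) (P : seq (R * R))
  (hP : forall p, p \in P -> in_cell x y p) :
  (forall p, p \in P -> connected (contrib y P p)) /\
  (forall pi pj, pi \in P -> pj \in P ->
     contributes y P pi -> contributes y P pj ->
     (left_of (contrib y P pi) (contrib y P pj) <-> pi.1 < pj.1)).
Proof.
have below r : r \in P -> r.2 < y%:~R + 1 by case/hP => _ /andP[].
split=> [p|pi pj iP jP [a [a' [ca ca' aa']]] [b [b' [cb _ _]]]].
  exact: connected_contrib.
split=> [ij_left|ij c d cc cd]; last first.
  by apply: contrib_ordered cc cd => //; [exact: ltW | move=> e; rewrite e ltxx in ij].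
rewrite ltNge; apply/negP => ji; apply/aa'/(contrib_fst below iP ca ca').
have [e|neq] := eqVneq pj pi.
  rewrite e in ij_left.
  by apply/le_anti; rewrite !(ij_left _ _ ca ca', ij_left _ _ ca' ca).
have b_left := contrib_ordered below jP iP ji (elimN eqP neq) cb.
by apply/le_anti/andP; split; apply: le_trans (ij_left _ _ _ cb) (b_left _ _).
Qed.
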